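(* Let $q\in(0,1)$ and let $w\ge 2$ be an integer. Consider a clique of size $w$ with vertices $u,1,2,\dots,w-1$, where $u$ (the parent of the clique) is initially active and $1,\dots,w-1$ (the children inside the clique) are initially inactive. For $1\le i\le w-1$, vertex $i$ has, besides the $w-1$ other clique vertices, exactly $X_i$ further neighbors (its own children), which are inactive and remain inactive throughout; thus vertex $i$ has degree $X_i+w-1$. The contagion evolves in discrete time: an inactive vertex $i$ becomes active as soon as its proportion of active neighbors is strictly greater than $q$, and active vertices remain active. Let $L$ be the final number of active vertices among $1,\dots,w-1$, and let $X_{(1)}\le X_{(2)}\le\dots\le X_{(w-1)}$ be the order statistics of $(X_i)_{1\le i\le w-1}$. Then $$L=\min\Big\{i\in\{1,\dots,w-1\}\;\Big|\;\lfloor q(X_{(i)}+w-1)\rfloor+1>i\Big\}-1,$$ with the convention $L=w-1$ if this set is empty (i.e. if $\lfloor q(X_{(i)}+w-1)\rfloor+1\le i$ for all $1\le i\le w-1$).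
   Context: The $X_i$ are nonnegative integers. In the paper's setting, this clique is a clique of the random graph obtained as the one-mode projection of an alternating branching process, and $X_i$ is the number of children of vertex $i$ in that graph. *)

From HB Require Import structures.
From mathcomp Require Import all_boot all_order all_algebra.
From mathcomp Require Import reals.
Set Implicit Arguments. Unset Strict Implicit. Unset Printing Implicit Defensive.
Import Order.TTheory GRing.Theory Num.Theory.
Local Open Scope ring_scope.

(* The clique has vertices u, 1, ..., w-1.  The children 1..w-1 are indexed
   by 'I_(w-1) (child i+1 of the paper is the ordinal i).  X i is the number
   of extra (own-children) neighbours of that child; these stay inactive.
   The state of the contagion is the set of active children; u is always
   active.  Degree of child i is X i + w - 1; its active neighbours at a
   given time are u plus the active children other than itself. *)

Definition deg_child (w : nat) (X : 'I_(w.-1) -> nat) (i : 'I_(w.-1)) : nat :=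
  (X i + w.-1)%N.

Definition active_nbrs (w : nat) (S : {set 'I_(w.-1)}) (i : 'I_(w.-1)) : nat :=
  (1 + #|S :\ i|)%N.

Definition step (R : realType) (q : R) (w : nat) (X : 'I_(w.-1) -> nat)
    (S : {set 'I_(w.-1)}) : {set 'I_(w.-1)} :=
  S :|: [set i | (i \notin S) &&
                 (q < (active_nbrs S i)%:R / (deg_child X i)%:R)].

Definition active_at (R : realType) (q : R) (w : nat) (X : 'I_(w.-1) -> nat)
    (t : nat) : {set 'I_(w.-1)} :=
  iter t (step q X) set0.

(* order statistics, 1-based: X_(1) <= ... <= X_(w-1) *)
Definition order_stat (w : nat) (X : 'I_(w.-1) -> nat) (i : nat) : nat :=
  nth 0%N (sort leq [seq X j | j <- enum 'I_(w.-1)]) i.-1.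

Definition cond (R : realType) (q : R) (w : nat) (X : 'I_(w.-1) -> nat)
    (i : nat) : bool :=
  (i%:Z < Num.floor (q * (order_stat X i + w.-1)%:R) + 1)%R.

From HB Require Import structures.
From mathcomp Require Import all_boot all_order all_algebra.
From mathcomp Require Import reals zify.
Import Order.TTheory GRing.Theory Num.Theory.

(* If S is the set of active children, an inactive child i turns active iff
   q (X i + w - 1) < #|S| + 1.  This test depends on S only through #|S|, is
   monotone in #|S| and antitone in X i, so the set active at time t + 1 is
   exactly the set of children passing the test for the count at time t, and
   the count iterates the monotone map c k := #|{i | q (X i + w - 1) < k + 1}|
   from 0 until it reaches the least k with c k <= k.  Since c k >= j iff the
   order statistic X_(j) passes the test for k, c k <= k is exactly
   cond (k + 1); hence that least k is min {i | cond i} - 1. *)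

Lemma card_set_count (T : finType) (p : pred T) :
  #|[set x | p x]| = count p (enum T).
Proof.
rewrite cardsE cardE /enum_mem size_filter count_filter.
by apply: eq_count => x; rewrite /= andbT.
Qed.

Lemma sorted_nth_count {T : Type} (x0 : T) {leT : rel T} {P : pred T}
    {s : seq T} {j : nat} :
  transitive leT -> (forall x y, leT x y -> P y -> P x) ->
  sorted leT s -> (j < size s)%N ->
  P (nth x0 s j) = (j < count P s)%N.
Proof.
move=> leT_tr P_down; elim: s j => [|x s IHs] j //=.
rewrite (path_sortedE leT_tr) => /andP[x_le s_sorted].
have count0 : ~~ P x -> count P s = 0%N.
  move=> nPx; apply/eqP; rewrite -leqn0 leqNgt -has_count -all_predC.
  by apply: sub_all x_le => y /P_down /contra; apply.
case: j => [|j] /= j_lt; first by case: (P x) count0 => //= ->.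
rewrite IHs // ?ltnS //; case Px: (P x) => //=.
by rewrite count0 ?Px.
Qed.

Lemma iter_monotone_fixpoint (f : nat -> nat) (M : nat) :
  {homo f : a b / (a <= b)%N} -> (forall k, (k < M)%N -> (k < f k)%N) ->
  (f M <= M)%N -> forall t, (M <= t)%N -> iter t f 0%N = M.
Proof.
move=> f_homo f_incr fM_le.
have fM : f M = M.
  apply/eqP; rewrite eqn_leq fM_le; case: M f_incr {fM_le} => //= M f_incr.
  exact: leq_trans (f_incr M (leqnn _)) (f_homo _ _ (leqnSn M)).
have iter_bounds t : (minn t M <= iter t f 0 <= M)%N.
  elim: t => [|t /andP[lb ub]] /=; first by rewrite min0n.
  rewrite -{2}fM f_homo // andbT.
  have [lt_M|ge_M] := ltnP (iter t f 0) M.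
    by have := f_incr _ lt_M; lia.
  have -> : iter t f 0 = M by lia.
  by rewrite fM geq_minr.
by move=> t le_Mt; move: (iter_bounds t); rewrite (minn_idPr le_Mt); lia.
Qed.

Local Open Scope ring_scope.

Section Contagion.

Variables (R : realType) (q : R) (w : nat) (X : 'I_(w.-1) -> nat).
Local Notation n := w.-1.

(* A child with [x] own children becomes active once [k] other children are. *)
Definition threshold_met (k x : nat) : bool := q * (x + n)%:R < k.+1%:R.

Definition ready (k : nat) : {set 'I_n} := [set i | threshold_met k (X i)].

Lemma threshold_metW (k k' x : nat) :
  (k <= k')%N -> threshold_met k x -> threshold_met k' x.
Proof. by move=> le_kk' /lt_le_trans; apply; rewrite ler_nat ltnS. Qed.

Lemma ready_homo : {homo (fun k => #|ready k|) : a b / (a <= b)%N}.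
Proof.
move=> a b le_ab; apply/subset_leq_card/subsetP => i.
by rewrite !inE; apply: threshold_metW.
Qed.

Lemma stepE (S : {set 'I_n}) : step q X S = S :|: ready #|S|.
Proof.
apply/setP => i; rewrite !inE; case: (boolP (i \in S)) => //= i_notin.
have S_i : S :\ i = S by apply/setDidPl; rewrite disjoint_sym disjoints1.
rewrite /active_nbrs S_i /deg_child ltr_pdivlMr // ltr0n addn_gt0.
by rewrite (leq_ltn_trans (leq0n i) (ltn_ord i)) orbT.
Qed.

Lemma active_at_ready (t : nat) :
  active_at q X t \subset ready #|active_at q X t|.
Proof.
elim: t => [|t IHt]; first exact: sub0set.
rewrite /active_at iterS -/(active_at q X t) stepE (setUidPr IHt).
apply/subsetP => i; rewrite !inE; apply: threshold_metW.
by rewrite -(setUidPr IHt) -stepE; apply/subset_leq_card/subsetUl.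
Qed.

Lemma card_active_at (t : nat) :
  #|active_at q X t| = iter t (fun k => #|ready k|) 0%N.
Proof.
elim: t => [|t IHt]; first by rewrite cards0.
rewrite /active_at iterS -/(active_at q X t) stepE.
by rewrite (setUidPr (active_at_ready t)) IHt.
Qed.

Hypothesis q_ge0 : 0 <= q.

Lemma card_ready_order_stat (k j : nat) : (j < n)%N ->
  (j < #|ready k|)%N = threshold_met k (order_stat X j.+1).
Proof.
move=> lt_jn; rewrite /ready card_set_count -(count_map X (threshold_met k)).
rewrite -(count_sort leq) /order_stat /= (sorted_nth_count 0%N leq_trans) //.
- by move=> x y le_xy /(le_lt_trans _); apply; rewrite ler_wpM2l // ler_nat leq_add2r.
- by apply: sort_sorted; exact: leq_total.
- by rewrite size_sort size_map size_enum_ord.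
Qed.

Lemma cond_card_ready (j : nat) : (j < n)%N ->
  cond q X j.+1 = (#|ready j| <= j)%N.
Proof.
move=> lt_jn; rewrite leqNgt card_ready_order_stat // /cond /threshold_met.
by rewrite ltzD1 floor_ge_int -leNgt.
Qed.

Lemma card_active_at_stable (M : nat) : (M <= n)%N ->
  (forall i, (1 <= i <= M)%N -> ~~ cond q X i) ->
  ((M < n)%N -> cond q X M.+1) ->
  forall t, (M <= t)%N -> #|active_at q X t| = M.
Proof.
move=> le_Mn below_M at_M t le_Mt; rewrite card_active_at.
apply: iter_monotone_fixpoint le_Mt; first exact: ready_homo.
  move=> k lt_kM; have := below_M k.+1 lt_kM.
  by rewrite cond_card_ready ?(leq_trans lt_kM le_Mn) // -ltnNge.
have [lt_Mn|eq_Mn] := ltnP M n; first by rewrite -cond_card_ready ?at_M.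
by rewrite (leq_trans (max_card _)) ?card_ord.
Qed.

End Contagion.

Theorem lemma1 (R : realType) (q : R) (w : nat) (X : 'I_(w.-1) -> nat) :
  0 < q -> q < 1 -> (2 <= w)%N ->
  exists L : nat,
    (exists T : nat, forall t : nat, (T <= t)%N -> #|active_at q X t| = L) /\
    ( ((forall i : nat, (1 <= i <= w.-1)%N -> ~~ cond q X i) /\ L = w.-1)
      \/ (exists m : nat, [/\ (1 <= m <= w.-1)%N, cond q X m,
             (forall i : nat, (1 <= i < m)%N -> ~~ cond q X i)
           & L = m.-1]) ).
Proof.
move=> /ltW q_ge0 _ _.
have [/existsP[m0 cond_m0] | no_cond] := boolP [exists m : 'I_w.-1, cond q X m.+1].
  have ex_cond : exists i, (0 < i <= w.-1)%N && cond q X i.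
    by exists m0.+1; rewrite ltn_ord cond_m0.
  case: (ex_minnP ex_cond) => m /andP[m_range cond_m] m_min.
  have below_m i : (1 <= i < m)%N -> ~~ cond q X i.
    case/andP=> i_gt0 lt_im; apply/negP => cond_i.
    have /m_min : (0 < i <= w.-1)%N && cond q X i by rewrite i_gt0 cond_i /=; lia.
    by rewrite leqNgt lt_im.
  exists m.-1; split; last by right; exists m.
  exists m.-1; apply: card_active_at_stable => //; first lia.
    by move=> i i_range; apply: below_m; lia.
  by rewrite prednK //; case/andP: m_range.
have below_n i : (1 <= i <= w.-1)%N -> ~~ cond q X i.
  case: i => // i /= lt_i; apply: contra no_cond => cond_i.
  by apply/existsP; exists (Ordinal lt_i).
exists w.-1; split; last by left.
by exists w.-1; apply: card_active_at_stable; rewrite ?ltnn.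
Qed.
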